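(* For $n\in\mathbb{Z}^+$ we have $$\begin{aligned}&t(1,4,15;n)=2N(1,4,15;2n+5)&&\text{for } n\equiv 0\pmod 4,\\ &t(1,12,15;n)=2N(1,12,15;2n+7)&&\text{for } n\equiv 2\pmod 4,\\ &t(1,15,20;n)=2N(1,15,20;2n+9)&&\text{for } n\equiv 2\pmod 4,\\ &t(3,4,45;n)=2N(3,4,45;2n+13)&&\text{for } n\equiv 2\pmod 4.\end{aligned}$$
   Context: $\mathbb{Z}^+$ is the set of positive integers. For $a,b,c\in\mathbb{Z}^+$ and nonnegative integer $n$, $N(a,b,c;n)$ denotes the number of triples $(x,y,z)\in\mathbb{Z}^3$ with $n=ax^2+by^2+cz^2$, and $t(a,b,c;n)$ denotes the number of triples $(x,y,z)\in\mathbb{Z}^3$ with $n=a\frac{x(x+1)}2+b\frac{y(y+1)}2+c\frac{z(z+1)}2$. *)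

From Stdlib Require Import ZArith List.
Import ListNotations.
Open Scope Z_scope.

Definition zbox (B : nat) : list Z :=
  map (fun k => Z.of_nat k - Z.of_nat B) (seq 0 (2 * B + 1)).

Definition count3 (B : nat) (P : Z -> Z -> Z -> bool) : nat :=
  length (filter (fun t => match t with (x, (y, z)) => P x y z end)
    (list_prod (zbox B) (list_prod (zbox B) (zbox B)))).

(* N(a,b,c;n) = #{(x,y,z) in Z^3 : n = a x^2 + b y^2 + c z^2}, for a,b,c >= 1, n >= 0.
   Every solution satisfies |x|,|y|,|z| <= n, so counting in the box
   [-(n+1), n+1]^3 counts all solutions in Z^3. *)
Definition Nrep (a b c n : Z) : nat :=
  count3 (Z.to_nat n + 1)
    (fun x y z => Z.eqb n (a * x ^ 2 + b * y ^ 2 + c * z ^ 2)).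

(* triangular number x(x+1)/2 (exact division since x(x+1) is even) *)
Definition tri (x : Z) : Z := x * (x + 1) / 2.

(* t(a,b,c;n) = #{(x,y,z) in Z^3 : n = a T(x) + b T(y) + c T(z)}.  For a,b,c >= 1
   every solution has T(x) <= n, which forces |x| <= n + 1, so the box
   [-(n+1), n+1]^3 contains all solutions. *)
Definition trep (a b c n : Z) : nat :=
  count3 (Z.to_nat n + 1)
    (fun x y z => Z.eqb n (a * tri x + b * tri y + c * tri z)).

(* Put X = 2x + 1, Y = 2y + 1, Z = 2z + 1.  Since (2x + 1)^2 = 8 T(x) + 1, t(a,b,c;n) counts
   the odd solutions of a X^2 + b Y^2 + c Z^2 = 4m with m = 2n + (a + b + c)/4, so each identity
   says that 4m has twice as many odd representations as m has representations.  Both sides are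
   matched by two substitutions of norm 4, coming from multiplication by (1 - sqrt(-15))/2 and by
   1 - sqrt(-3):
     ((a + 15b)/2)^2 + 15((a - b)/2)^2 = 4(a^2 + 15b^2),    (i + 3j)^2 + 3(i - j)^2 = 4(i^2 + 3j^2).
   The first acts on the pair of coordinates with coefficients 1 and 15 (or 3 and 45); in the last
   three identities the second acts on the remaining coordinate together with one output of the
   first.  The congruence on n forces every representation of m into the parity classes where these
   substitutions produce odd integers, and the two choices of a sign make the correspondence
   exactly two-to-one. *)

From Stdlib Require Import ZArith List Lia.
Import ListNotations.
Open Scope Z_scope.

Notation Z3 := (Z * (Z * Z))%type.

Lemma Z3_eq (x y z x' y' z' : Z) : (x, (y, z)) = (x', (y', z')) <-> x = x' /\ y = y' /\ z = z'.
Proof. rewrite !pair_equal_spec. tauto. Qed.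

Definition cube (B : nat) : list Z3 := list_prod (zbox B) (list_prod (zbox B) (zbox B)).

Definition sat (p : Z -> Z -> Z -> bool) (t : Z3) : bool :=
  let '(x, (y, z)) := t in p x y z.

Lemma count3_filter B p : count3 B p = length (filter (sat p) (cube B)).
Proof. reflexivity. Qed.

Lemma NoDup_list_prod {A B : Type} (l : list A) (m : list B) :
  NoDup l -> NoDup m -> NoDup (list_prod l m).
Proof.
  intros Hl Hm; induction Hl as [|a l Ha Hl IH]; cbn; [constructor|].
  apply NoDup_app; auto.
  - apply NoDup_map_NoDup_ForallPairs; auto.
    intros b b' _ _ E; now injection E.
  - intros [a' b] H1 H2. apply in_map_iff in H1 as [b' [E _]]; injection E as <- _.
    apply in_prod_iff in H2 as [H2 _]. contradiction.
Qed.

Lemma NoDup_cube B : NoDup (cube B).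
Proof.
  assert (Hz : NoDup (zbox B)).
  { apply NoDup_map_NoDup_ForallPairs; [intros i j _ _ E; lia | apply seq_NoDup]. }
  repeat apply NoDup_list_prod; exact Hz.
Qed.

Lemma in_cube B x y z :
  In (x, (y, z)) (cube B) <->
  Z.abs x <= Z.of_nat B /\ Z.abs y <= Z.of_nat B /\ Z.abs z <= Z.of_nat B.
Proof.
  assert (Hz : forall k, In k (zbox B) <-> Z.abs k <= Z.of_nat B).
  { intro k. unfold zbox. rewrite in_map_iff. split.
    - intros [j [<- Hj]]. apply in_seq in Hj. lia.
    - intro Hk. exists (Z.to_nat (k + Z.of_nat B)). rewrite in_seq. lia. }
  unfold cube. now rewrite !in_prod_iff, !Hz.
Qed.

Lemma length_filter_image {A B : Type} (p : A -> bool) (q : B -> bool) (g : B -> A)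
    (l : list A) (m : list B) :
  NoDup l -> NoDup m ->
  (forall b, In b m -> q b = true -> In (g b) l /\ p (g b) = true) ->
  (forall b b', In b m -> In b' m -> q b = true -> q b' = true -> g b = g b' -> b = b') ->
  (forall a, In a l -> p a = true -> exists b, In b m /\ q b = true /\ g b = a) ->
  length (filter p l) = length (filter q m).
Proof.
  intros Hl Hm Hmaps Hinj Hsurj. apply Nat.le_antisymm.
  - rewrite <- (length_map g). apply NoDup_incl_length; [now apply NoDup_filter|].
    intros a Ha. apply filter_In in Ha as [Ha Hpa].
    destruct (Hsurj a Ha Hpa) as [b [Hb [Hqb <-]]].
    apply in_map. now apply filter_In.
  - rewrite <- (length_map g). apply NoDup_incl_length.
    + apply NoDup_map_NoDup_ForallPairs; [|now apply NoDup_filter].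
      intros b b' Hb Hb'. apply filter_In in Hb as [Hb Hqb], Hb' as [Hb' Hqb'].
      now apply Hinj.
    + intros a Ha. apply in_map_iff in Ha as [b [<- Hb]]. apply filter_In in Hb as [Hb Hqb].
      apply filter_In, Hmaps; assumption.
Qed.

Section Counting.

Variables (B1 B2 : nat) (p q : Z -> Z -> Z -> bool).
Hypothesis p_in_cube : forall s, sat p s = true -> In s (cube B1).
Hypothesis q_in_cube : forall t, sat q t = true -> In t (cube B2).

Lemma count3_bij (g : Z3 -> Z3) :
  (forall t, sat q t = true -> sat p (g t) = true) ->
  (forall t t', sat q t = true -> sat q t' = true -> g t = g t' -> t = t') ->
  (forall s, sat p s = true -> exists t, sat q t = true /\ g t = s) ->
  count3 B1 p = count3 B2 q.
Proof.
  intros Hmaps Hinj Hsurj. rewrite !count3_filter.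
  apply length_filter_image with (g := g); try apply NoDup_cube.
  - intros t _ Ht. auto.
  - intros t t' _ _. apply Hinj.
  - intros s _ Hs. destruct (Hsurj s Hs) as [t [Ht <-]]. eauto.
Qed.

Lemma count3_double (g : Z3 -> bool -> Z3) :
  (forall t e, sat q t = true -> sat p (g t e) = true) ->
  (forall t e t' e', sat q t = true -> sat q t' = true -> g t e = g t' e' -> t = t' /\ e = e') ->
  (forall s, sat p s = true -> exists t e, sat q t = true /\ g t e = s) ->
  count3 B1 p = (2 * count3 B2 q)%nat.
Proof.
  intros Hmaps Hinj Hsurj.
  assert (Hdouble : forall l : list Z3,
    length (filter (fun te => sat q (fst te)) (list_prod l [true; false]))
    = (2 * length (filter (sat q) l))%nat).
  { induction l as [|t l IH]; cbn; [reflexivity|]. destruct (sat q t); cbn; lia. }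
  rewrite !count3_filter, <- Hdouble.
  apply length_filter_image with (g := fun te => g (fst te) (snd te)).
  - apply NoDup_cube.
  - apply NoDup_list_prod; [apply NoDup_cube | repeat constructor; cbn; intuition discriminate].
  - intros [t e] _ Ht. auto.
  - intros [t e] [t' e'] _ _ Ht Ht' E. cbn in *. now destruct (Hinj t e t' e' Ht Ht' E) as [-> ->].
  - intros s _ Hs. destruct (Hsurj s Hs) as [t [e [Ht <-]]].
    exists (t, e). split; [|auto]. apply in_prod; [auto | destruct e; cbn; auto].
Qed.

End Counting.

(** * Representations by ternary diagonal forms *)

Definition represents (a b c n : Z) (t : Z3) : Prop :=
  let '(x, (y, z)) := t in n = a * (x * x) + b * (y * y) + c * (z * z).

Definition odd3 (t : Z3) : Prop :=
  let '(x, (y, z)) := t in x mod 2 = 1 /\ y mod 2 = 1 /\ z mod 2 = 1.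

Definition is_rep (a b c n : Z) (x y z : Z) : bool := n =? a * x ^ 2 + b * y ^ 2 + c * z ^ 2.

Definition is_oddrep (a b c n : Z) (x y z : Z) : bool :=
  Z.odd x && Z.odd y && Z.odd z && is_rep a b c n x y z.

Definition oddrep (a b c n : Z) : nat := count3 (Z.to_nat n + 1) (is_oddrep a b c n).

Lemma Nrep_count3 a b c n : Nrep a b c n = count3 (Z.to_nat n + 1) (is_rep a b c n).
Proof. reflexivity. Qed.

Lemma sat_is_rep a b c n t : sat (is_rep a b c n) t = true <-> represents a b c n t.
Proof.
  destruct t as [x [y z]]. unfold sat, is_rep, represents. now rewrite Z.eqb_eq, !Z.pow_2_r.
Qed.

Lemma sat_is_oddrep a b c n t :
  sat (is_oddrep a b c n) t = true <-> odd3 t /\ represents a b c n t.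
Proof.
  rewrite <- sat_is_rep. destruct t as [x [y z]]. unfold sat, is_oddrep, odd3.
  rewrite !Bool.andb_true_iff, !Zodd_mod, !Z.eqb_eq. tauto.
Qed.

Lemma is_rep_in_cube a b c n t : 1 <= a -> 1 <= b -> 1 <= c ->
  sat (is_rep a b c n) t = true -> In t (cube (Z.to_nat n + 1)).
Proof.
  rewrite sat_is_rep. destruct t as [x [y z]]. unfold represents. rewrite in_cube.
  intros Ha Hb Hc E.
  assert (Hn : 0 <= n) by nia.
  rewrite Nat2Z.inj_add, Z2Nat.id by exact Hn.
  repeat split; nia.
Qed.

Lemma is_oddrep_in_cube a b c n t : 1 <= a -> 1 <= b -> 1 <= c ->
  sat (is_oddrep a b c n) t = true -> In t (cube (Z.to_nat n + 1)).
Proof.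
  intros Ha Hb Hc Ht. apply is_rep_in_cube with a b c; auto.
  apply sat_is_oddrep in Ht. apply sat_is_rep. tauto.
Qed.

Definition is_trirep (a b c n : Z) (x y z : Z) : bool := n =? a * tri x + b * tri y + c * tri z.

Lemma sat_is_trirep a b c n x y z :
  sat (is_trirep a b c n) (x, (y, z)) = true <-> n = a * tri x + b * tri y + c * tri z.
Proof. apply Z.eqb_eq. Qed.

Lemma double_tri x : 2 * tri x = x * (x + 1).
Proof.
  unfold tri. destruct (Z.Even_or_Odd x) as [[k ->]|[k ->]].
  - replace (2 * k * (2 * k + 1)) with (k * (2 * k + 1) * 2) by ring.
    rewrite Z.div_mul by lia. ring.
  - replace ((2 * k + 1) * (2 * k + 1 + 1)) with ((2 * k + 1) * (k + 1) * 2) by ring.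
    rewrite Z.div_mul by lia. ring.
Qed.

Lemma odd_square_tri x : (2 * x + 1) * (2 * x + 1) = 8 * tri x + 1.
Proof. pose proof (double_tri x). lia. Qed.

Lemma is_trirep_in_cube a b c n t : 1 <= a -> 1 <= b -> 1 <= c ->
  sat (is_trirep a b c n) t = true -> In t (cube (Z.to_nat n + 1)).
Proof.
  destruct t as [x [y z]]. rewrite sat_is_trirep, in_cube. intros Ha Hb Hc E.
  pose proof (double_tri x); pose proof (double_tri y); pose proof (double_tri z).
  assert (0 <= tri x /\ 0 <= tri y /\ 0 <= tri z) by (repeat split; nia).
  assert (Hn : 0 <= n) by nia.
  rewrite Nat2Z.inj_add, Z2Nat.id by exact Hn.
  repeat split; nia.
Qed.

Lemma trep_oddrep a b c n : 1 <= a -> 1 <= b -> 1 <= c ->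
  trep a b c n = oddrep a b c (8 * n + a + b + c).
Proof.
  intros Ha Hb Hc. symmetry.
  change (trep a b c n) with (count3 (Z.to_nat n + 1) (is_trirep a b c n)).
  apply count3_bij
    with (g := fun t => let '(x, (y, z)) := t in (2 * x + 1, (2 * y + 1, 2 * z + 1))).
  - intros t. now apply is_oddrep_in_cube.
  - intros t. now apply is_trirep_in_cube.
  - intros [x [y z]]. rewrite sat_is_trirep, sat_is_oddrep. intros E.
    split; [repeat split; Z.div_mod_to_equations; lia|].
    hnf. rewrite !odd_square_tri. subst n. ring.
  - intros [x [y z]] [x' [y' z']] _ _ E. apply Z3_eq in E. apply Z3_eq. lia.
  - intros [X [Y Z]]. rewrite sat_is_oddrep. intros [(HX & HY & HZ) E].
    exists ((X - 1) / 2, ((Y - 1) / 2, (Z - 1) / 2)).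
    assert (HX' : 2 * ((X - 1) / 2) + 1 = X) by (Z.div_mod_to_equations; lia).
    assert (HY' : 2 * ((Y - 1) / 2) + 1 = Y) by (Z.div_mod_to_equations; lia).
    assert (HZ' : 2 * ((Z - 1) / 2) + 1 = Z) by (Z.div_mod_to_equations; lia).
    rewrite HX', HY', HZ'. split; [|reflexivity].
    apply sat_is_trirep. hnf in E.
    rewrite <- HX', <- HY', <- HZ', !odd_square_tri in E. lia.
Qed.

(** * Squares modulo 8 and 16 *)

Lemma square_cases x : exists k j,
  x = 2 * k + 1 /\ x * x = 8 * j + 1 \/ x = 4 * k + 2 /\ x * x = 8 * j + 4 \/
  x = 4 * k /\ x * x = 8 * j.
Proof.
  destruct (Z.Even_or_Odd x) as [[h ->]|[h ->]]; destruct (Z.Even_or_Odd h) as [[k ->]|[k ->]].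
  - exists k, (2 * k * k). right; right. split; ring.
  - exists k, (2 * k * k + 2 * k). right; left. split; ring.
  - exists (2 * k), (k * (2 * k + 1)). left. split; ring.
  - exists (2 * k + 1), ((k + 1) * (2 * k + 1)). left. split; ring.
Qed.

Ltac square_cases_on x :=
  let k := fresh "k" in let j := fresh "j" in let H := fresh "H" in
  destruct (square_cases x) as (k & j & [[-> H]|[[-> H]|[-> H]]]).

Lemma odd_square_cases x : x mod 2 = 1 -> exists k j,
  (x = 8 * k + 1 \/ x = 8 * k - 1) /\ x * x = 16 * j + 1 \/
  (x = 8 * k + 3 \/ x = 8 * k - 3) /\ x * x = 16 * j + 9.
Proof.
  intro Hx. assert (Eh : x = 2 * (x / 2) + 1) by (Z.div_mod_to_equations; lia).
  destruct (Z.Even_or_Odd (x / 2)) as [[g Eg]|[g Eg]]; rewrite Eg in Eh; clear Eg;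
    destruct (Z.Even_or_Odd g) as [[k ->]|[k ->]]; subst x.
  - exists k, (4 * k * k + k). left. split; [left|]; ring.
  - exists (k + 1), (4 * k * k + 5 * k + 1). right. split; [right|]; ring.
  - exists k, (4 * k * k + 3 * k). right. split; [left|]; ring.
  - exists (k + 1), (4 * k * k + 7 * k + 3). left. split; [right|]; ring.
Qed.

Lemma odd_square_mod8 x : x mod 2 = 1 -> exists j, x * x = 8 * j + 1.
Proof.
  intro Hx. destruct (odd_square_cases x Hx) as (k & j & [[_ E]|[_ E]]);
    [exists (2 * j) | exists (2 * j + 1)]; lia.
Qed.

(** * Two substitutions of norm 4 *)

Definition signed (e : bool) (x : Z) : Z := if e then x else - x.

Lemma signed_square e x : signed e x * signed e x = x * x.
Proof. destruct e; cbn; ring. Qed.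

Definition lift3 (i j : Z) (e : bool) : Z * Z := (i + 3 * j, signed e (i - j)).

Lemma lift3_spec i j e x y : (i - j) mod 2 = 1 -> lift3 i j e = (x, y) ->
  x mod 2 = 1 /\ y mod 2 = 1 /\ x * x + 3 * (y * y) = 4 * (i * i + 3 * (j * j)).
Proof.
  intros Hij E. apply pair_equal_spec in E as [<- <-]. rewrite signed_square.
  split; [|split]; [| destruct e; cbn [signed] | ring]; Z.div_mod_to_equations; lia.
Qed.

Lemma lift3_inj i j e i' j' e' : (i - j) mod 2 = 1 ->
  lift3 i j e = lift3 i' j' e' -> i = i' /\ j = j' /\ e = e'.
Proof.
  intros Hij E. apply pair_equal_spec in E as [E1 E2].
  destruct e, e'; cbn [signed] in E2; Z.div_mod_to_equations; repeat split; lia.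
Qed.

Lemma lift3_surj x y : x mod 2 = 1 -> y mod 2 = 1 ->
  exists i j e, (i - j) mod 2 = 1 /\ lift3 i j e = (x, y).
Proof.
  intros Hx Hy. unfold lift3, signed.
  destruct (Z.eq_dec ((x - y) mod 4) 0) as [H | H].
  - exists ((x - y) / 4 + y), ((x - y) / 4), true.
    split; [|f_equal]; Z.div_mod_to_equations; lia.
  - exists ((x + y) / 4 - y), ((x + y) / 4), false.
    split; [|f_equal]; Z.div_mod_to_equations; lia.
Qed.

Definition lift15 (a b : Z) (e : bool) : Z * Z := ((a + 15 * b) / 2, signed e ((a - b) / 2)).

Lemma lift15_spec a b e X Z : (a - b) mod 4 = 2 -> lift15 a b e = (X, Z) ->
  X mod 2 = 1 /\ Z mod 2 = 1 /\ X * X + 15 * (Z * Z) = 4 * (a * a + 15 * (b * b)).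
Proof.
  intros Hab E. apply pair_equal_spec in E as [<- <-]. rewrite signed_square.
  assert (Hr : exists r, a = b + 2 * r /\ r mod 2 = 1)
    by (exists ((a - b) / 2); Z.div_mod_to_equations; lia).
  destruct Hr as [r [-> Hr]].
  replace ((b + 2 * r + 15 * b) / 2) with (r + 8 * b) by (Z.div_mod_to_equations; lia).
  replace ((b + 2 * r - b) / 2) with r by (Z.div_mod_to_equations; lia).
  split; [|split]; [| destruct e; cbn [signed] | ring]; Z.div_mod_to_equations; lia.
Qed.

Lemma lift15_inj a b e a' b' e' : (a - b) mod 4 = 2 -> (a' - b') mod 4 = 2 ->
  lift15 a b e = lift15 a' b' e' -> a = a' /\ b = b' /\ e = e'.
Proof.
  intros Hab Hab' E. apply pair_equal_spec in E as [E1 E2].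
  destruct e, e'; cbn [signed] in E2; Z.div_mod_to_equations; repeat split; lia.
Qed.

Lemma lift15_surj X Z : X mod 2 = 1 -> Z mod 2 = 1 -> (X * X + 15 * (Z * Z)) mod 16 = 0 ->
  exists a b e, (a - b) mod 4 = 2 /\ lift15 a b e = (X, Z).
Proof.
  intros HX HZ H16. unfold lift15, signed.
  assert (Hpm : (X - Z) mod 8 = 0 \/ (X + Z) mod 8 = 0).
  { destruct (odd_square_cases X HX) as (k & j & [[[->| ->] Hj]|[[->| ->] Hj]]),
      (odd_square_cases Z HZ) as (k' & j' & [[[->| ->] Hj']|[[->| ->] Hj']]);
      Z.div_mod_to_equations; lia. }
  destruct Hpm as [H | H].
  - exists ((X + 15 * Z) / 8), ((X - Z) / 8), true.
    split; [|f_equal]; Z.div_mod_to_equations; lia.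
  - exists ((X - 15 * Z) / 8), ((X + Z) / 8), false.
    split; [|f_equal]; Z.div_mod_to_equations; lia.
Qed.

(* For odd [a] and [w] exactly one of [w], [-w] puts the pair in the domain [(a - b) mod 4 = 2]
   of [lift15]; reusing that sign for the second coordinate keeps the map injective. *)
Definition lift15_oriented (a w : Z) : Z * Z :=
  let e := (a - w) mod 4 =? 2 in lift15 a (signed e w) e.

Lemma orient_domain a w : a mod 2 = 1 -> w mod 2 = 1 ->
  (a - signed ((a - w) mod 4 =? 2) w) mod 4 = 2.
Proof.
  intros Ha Hw. destruct (Z.eqb_spec ((a - w) mod 4) 2); cbn [signed];
    Z.div_mod_to_equations; lia.
Qed.

Lemma orient_signed a b e : (a - b) mod 4 = 2 -> b mod 2 = 1 ->
  ((a - signed e b) mod 4 =? 2) = e.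
Proof.
  intros Hab Hb. destruct e; cbn [signed]; [now apply Z.eqb_eq|].
  apply Z.eqb_neq. Z.div_mod_to_equations; lia.
Qed.

Lemma lift15_oriented_spec a w X Z : a mod 2 = 1 -> w mod 2 = 1 ->
  lift15_oriented a w = (X, Z) ->
  X mod 2 = 1 /\ Z mod 2 = 1 /\ X * X + 15 * (Z * Z) = 4 * (a * a + 15 * (w * w)).
Proof.
  intros Ha Hw E. rewrite <- (signed_square ((a - w) mod 4 =? 2) w).
  exact (lift15_spec _ _ _ _ _ (orient_domain a w Ha Hw) E).
Qed.

Lemma lift15_oriented_inj a w a' w' :
  a mod 2 = 1 -> w mod 2 = 1 -> a' mod 2 = 1 -> w' mod 2 = 1 ->
  lift15_oriented a w = lift15_oriented a' w' -> a = a' /\ w = w'.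
Proof.
  intros Ha Hw Ha' Hw' E.
  destruct (lift15_inj _ _ _ _ _ _ (orient_domain a w Ha Hw) (orient_domain a' w' Ha' Hw') E)
    as (<- & Hs & He).
  rewrite He in Hs. destruct ((a - w') mod 4 =? 2); cbn [signed] in Hs; split; lia.
Qed.

Lemma lift15_oriented_surj X Z : X mod 2 = 1 -> Z mod 2 = 1 ->
  (X * X + 15 * (Z * Z)) mod 32 = 0 ->
  exists a w, a mod 2 = 1 /\ w mod 2 = 1 /\ lift15_oriented a w = (X, Z).
Proof.
  intros HX HZ H32.
  assert (H16 : (X * X + 15 * (Z * Z)) mod 16 = 0).
  { revert H32. generalize (X * X + 15 * (Z * Z)). intros N HN. Z.div_mod_to_equations; lia. }
  destruct (lift15_surj X Z HX HZ H16) as (a & b & e & Hab & E).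
  destruct (lift15_spec a b e X Z Hab E) as (_ & _ & Hnorm).
  assert (Hb : b mod 2 = 1).
  { rewrite Hnorm in H32. clear - Hab H32.
    square_cases_on a; square_cases_on b; Z.div_mod_to_equations; lia. }
  exists a, (signed e b). split; [|split].
  - Z.div_mod_to_equations; lia.
  - destruct e; cbn [signed]; Z.div_mod_to_equations; lia.
  - unfold lift15_oriented. rewrite orient_signed by assumption.
    destruct e; cbn [signed]; now rewrite ?Z.opp_involutive.
Qed.

Lemma oddrep_twice_Nrep a b c m (g : Z3 -> bool -> Z3) : 1 <= a -> 1 <= b -> 1 <= c ->
  (forall t e, represents a b c m t -> odd3 (g t e) /\ represents a b c (4 * m) (g t e)) ->
  (forall t e t' e', represents a b c m t -> represents a b c m t' ->
     g t e = g t' e' -> t = t' /\ e = e') ->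
  (forall s, odd3 s -> represents a b c (4 * m) s ->
     exists t e, represents a b c m t /\ g t e = s) ->
  oddrep a b c (4 * m) = (2 * Nrep a b c m)%nat.
Proof.
  intros Ha Hb Hc Hmaps Hinj Hsurj. rewrite Nrep_count3. unfold oddrep.
  apply count3_double with (g := g).
  - intro s. now apply is_oddrep_in_cube.
  - intro t. now apply is_rep_in_cube.
  - intros t e. rewrite sat_is_rep, sat_is_oddrep. apply Hmaps.
  - intros t e t' e'. rewrite !sat_is_rep. apply Hinj.
  - intros s. rewrite sat_is_oddrep. intros [Hodd Hs].
    destruct (Hsurj s Hodd Hs) as (t & e & Ht & <-). exists t, e. now rewrite sat_is_rep.
Qed.

Definition lift_1_4_15 (t : Z3) (e : bool) : Z3 :=
  let '(u, (v, w)) := t in let '(X, Z) := lift15 (2 * v) w e in (X, (u, Z)).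

Lemma rep_1_4_15_parity m u v w : m mod 8 = 5 -> represents 1 4 15 m (u, (v, w)) ->
  u mod 2 = 1 /\ (2 * v - w) mod 4 = 2.
Proof.
  intros Hm E. hnf in E.
  assert (Hi : exists i, m = 8 * i + 5) by (exists (m / 8); Z.div_mod_to_equations; lia).
  destruct Hi as [i ->]. clear Hm.
  square_cases_on u; square_cases_on v; square_cases_on w; try lia;
    split; Z.div_mod_to_equations; lia.
Qed.

Lemma oddrep_1_4_15 m : m mod 8 = 5 -> oddrep 1 4 15 (4 * m) = (2 * Nrep 1 4 15 m)%nat.
Proof.
  intros Hm. apply oddrep_twice_Nrep with (g := lift_1_4_15); [lia | lia | lia | | |].
  - intros [u [v w]] e Ht.
    destruct (rep_1_4_15_parity m u v w Hm Ht) as [Hu Hvw].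
    unfold lift_1_4_15. destruct (lift15 (2 * v) w e) as [X Z] eqn:E.
    destruct (lift15_spec _ _ _ _ _ Hvw E) as (HX & HZ & Hnorm).
    split; [repeat split; assumption|]. hnf in Ht |- *. lia.
  - intros [u [v w]] e [u' [v' w']] e' Ht Ht' E.
    destruct (rep_1_4_15_parity m u v w Hm Ht) as [_ Hvw].
    destruct (rep_1_4_15_parity m u' v' w' Hm Ht') as [_ Hvw'].
    unfold lift_1_4_15 in E.
    destruct (lift15 (2 * v) w e) as [X Z] eqn:E1, (lift15 (2 * v') w' e') as [X' Z'] eqn:E2.
    apply Z3_eq in E as (-> & -> & ->). rewrite <- E2 in E1.
    destruct (lift15_inj _ _ _ _ _ _ Hvw Hvw' E1) as (? & -> & ->).
    split; [apply Z3_eq; lia | reflexivity].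
  - intros [X [Y Z]] (HX & HY & HZ) E. hnf in E.
    destruct (odd_square_mod8 Y HY) as [j HYj].
    assert (H16 : (X * X + 15 * (Z * Z)) mod 16 = 0)
      by (clear - Hm E HYj; Z.div_mod_to_equations; lia).
    destruct (lift15_surj X Z HX HZ H16) as (a & b & e & Hab & Ee).
    destruct (lift15_spec _ _ _ _ _ Hab Ee) as (_ & _ & Hnorm).
    assert (Ha : a = 2 * (a / 2)).
    { enough (a mod 2 = 0) by (Z.div_mod_to_equations; lia).
      assert (Hm' : m = a * a + 15 * (b * b) + Y * Y) by lia.
      clear - Hm Hm' Hab HYj. subst m.
      square_cases_on a; square_cases_on b; Z.div_mod_to_equations; lia. }
    exists (Y, (a / 2, b)), e. split.
    + hnf. rewrite Ha in Hnorm. lia.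
    + unfold lift_1_4_15. rewrite <- Ha, Ee. reflexivity.
Qed.

Lemma half_double x : 2 * x / 2 = x.
Proof. rewrite Z.mul_comm. apply Z.div_mul. lia. Qed.

Definition lift_1_12_15 (t : Z3) (e : bool) : Z3 :=
  let '(u, (v, w)) := t in
  let '(a, Y) := lift3 (u / 2) v e in
  let '(X, Z) := lift15_oriented a w in (X, (Y, Z)).

Lemma rep_1_12_15_parity m u v w : m mod 8 = 3 -> represents 1 12 15 m (u, (v, w)) ->
  u = 2 * (u / 2) /\ w mod 2 = 1 /\ (u / 2 - v) mod 2 = 1.
Proof.
  intros Hm E. hnf in E.
  assert (Hi : exists i, m = 8 * i + 3) by (exists (m / 8); Z.div_mod_to_equations; lia).
  destruct Hi as [i ->]. clear Hm.
  square_cases_on u; square_cases_on v; square_cases_on w; try lia;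
    repeat split; Z.div_mod_to_equations; lia.
Qed.

Lemma oddrep_1_12_15 m : m mod 8 = 3 -> oddrep 1 12 15 (4 * m) = (2 * Nrep 1 12 15 m)%nat.
Proof.
  intros Hm. apply oddrep_twice_Nrep with (g := lift_1_12_15); [lia | lia | lia | | |].
  - intros [u [v w]] e Ht.
    destruct (rep_1_12_15_parity m u v w Hm Ht) as (Hu & Hw & Huv).
    unfold lift_1_12_15.
    destruct (lift3 (u / 2) v e) as [a Y] eqn:E3.
    destruct (lift3_spec _ _ _ _ _ Huv E3) as (Ha & HY & Hnorm3).
    destruct (lift15_oriented a w) as [X Z] eqn:E15.
    destruct (lift15_oriented_spec _ _ _ _ Ha Hw E15) as (HX & HZ & Hnorm15).
    split; [repeat split; assumption|]. hnf in Ht |- *. rewrite Hu in Ht. lia.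
  - intros [u [v w]] e [u' [v' w']] e' Ht Ht' E.
    destruct (rep_1_12_15_parity m u v w Hm Ht) as (Hu & Hw & Huv).
    destruct (rep_1_12_15_parity m u' v' w' Hm Ht') as (Hu' & Hw' & Huv').
    unfold lift_1_12_15 in E.
    destruct (lift3 (u / 2) v e) as [a Y] eqn:E3, (lift3 (u' / 2) v' e') as [a' Y'] eqn:E3'.
    destruct (lift3_spec _ _ _ _ _ Huv E3) as (Ha & _),
      (lift3_spec _ _ _ _ _ Huv' E3') as (Ha' & _).
    destruct (lift15_oriented a w) as [X Z] eqn:E15, (lift15_oriented a' w') as [X' Z'] eqn:E15'.
    apply Z3_eq in E as (-> & -> & ->). rewrite <- E15' in E15.
    destruct (lift15_oriented_inj _ _ _ _ Ha Hw Ha' Hw' E15) as (-> & ->).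
    rewrite <- E3' in E3. destruct (lift3_inj _ _ _ _ _ _ Huv E3) as (Hu2 & -> & ->).
    split; [apply Z3_eq; lia | reflexivity].
  - intros [X [Y Z]] (HX & HY & HZ) E. hnf in E.
    destruct (odd_square_mod8 Y HY) as [j HYj].
    assert (H32 : (X * X + 15 * (Z * Z)) mod 32 = 0)
      by (clear - Hm E HYj; Z.div_mod_to_equations; lia).
    destruct (lift15_oriented_surj X Z HX HZ H32) as (a & w & Ha & Hw & E15).
    destruct (lift15_oriented_spec _ _ _ _ Ha Hw E15) as (_ & _ & Hnorm15).
    destruct (lift3_surj a Y Ha HY) as (i & k & e & Hik & E3).
    destruct (lift3_spec _ _ _ _ _ Hik E3) as (_ & _ & Hnorm3).
    exists (2 * i, (k, w)), e. split.
    + hnf. lia.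
    + unfold lift_1_12_15. now rewrite half_double, E3, E15.
Qed.

Definition lift_1_15_20 (t : Z3) (e : bool) : Z3 :=
  let '(u, (v, w)) := t in
  let '(Z, b) := lift3 w (v / 2) e in
  let '(X, Y) := lift15_oriented u b in (X, (Y, Z)).

Lemma rep_1_15_20_parity m u v w : m mod 8 = 5 -> represents 1 15 20 m (u, (v, w)) ->
  u mod 2 = 1 /\ v = 2 * (v / 2) /\ (w - v / 2) mod 2 = 1.
Proof.
  intros Hm E. hnf in E.
  assert (Hi : exists i, m = 8 * i + 5) by (exists (m / 8); Z.div_mod_to_equations; lia).
  destruct Hi as [i ->]. clear Hm.
  square_cases_on u; square_cases_on v; square_cases_on w; try lia;
    repeat split; Z.div_mod_to_equations; lia.
Qed.

Lemma oddrep_1_15_20 m : m mod 8 = 5 -> oddrep 1 15 20 (4 * m) = (2 * Nrep 1 15 20 m)%nat.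
Proof.
  intros Hm. apply oddrep_twice_Nrep with (g := lift_1_15_20); [lia | lia | lia | | |].
  - intros [u [v w]] e Ht.
    destruct (rep_1_15_20_parity m u v w Hm Ht) as (Hu & Hv & Hvw).
    unfold lift_1_15_20.
    destruct (lift3 w (v / 2) e) as [Z b] eqn:E3.
    destruct (lift3_spec _ _ _ _ _ Hvw E3) as (HZ & Hb & Hnorm3).
    destruct (lift15_oriented u b) as [X Y] eqn:E15.
    destruct (lift15_oriented_spec _ _ _ _ Hu Hb E15) as (HX & HY & Hnorm15).
    split; [repeat split; assumption|]. hnf in Ht |- *. rewrite Hv in Ht. lia.
  - intros [u [v w]] e [u' [v' w']] e' Ht Ht' E.
    destruct (rep_1_15_20_parity m u v w Hm Ht) as (Hu & Hv & Hvw).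
    destruct (rep_1_15_20_parity m u' v' w' Hm Ht') as (Hu' & Hv' & Hvw').
    unfold lift_1_15_20 in E.
    destruct (lift3 w (v / 2) e) as [Z b] eqn:E3, (lift3 w' (v' / 2) e') as [Z' b'] eqn:E3'.
    destruct (lift3_spec _ _ _ _ _ Hvw E3) as (_ & Hb & _),
      (lift3_spec _ _ _ _ _ Hvw' E3') as (_ & Hb' & _).
    destruct (lift15_oriented u b) as [X Y] eqn:E15, (lift15_oriented u' b') as [X' Y'] eqn:E15'.
    apply Z3_eq in E as (-> & -> & ->). rewrite <- E15' in E15.
    destruct (lift15_oriented_inj _ _ _ _ Hu Hb Hu' Hb' E15) as (-> & ->).
    rewrite <- E3' in E3. destruct (lift3_inj _ _ _ _ _ _ Hvw E3) as (-> & Hv2 & ->).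
    split; [apply Z3_eq; lia | reflexivity].
  - intros [X [Y Z]] (HX & HY & HZ) E. hnf in E.
    destruct (odd_square_mod8 Z HZ) as [j HZj].
    assert (H32 : (X * X + 15 * (Y * Y)) mod 32 = 0)
      by (clear - Hm E HZj; Z.div_mod_to_equations; lia).
    destruct (lift15_oriented_surj X Y HX HY H32) as (u & b & Hu & Hb & E15).
    destruct (lift15_oriented_spec _ _ _ _ Hu Hb E15) as (_ & _ & Hnorm15).
    destruct (lift3_surj Z b HZ Hb) as (i & k & e & Hik & E3).
    destruct (lift3_spec _ _ _ _ _ Hik E3) as (_ & _ & Hnorm3).
    exists (u, (2 * k, i)), e. split.
    + hnf. lia.
    + unfold lift_1_15_20. now rewrite half_double, E3, E15.
Qed.

Definition lift_3_4_45 (t : Z3) (e : bool) : Z3 :=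
  let '(u, (v, w)) := t in
  let '(Y, a) := lift3 v (u / 2) e in
  let '(X, Z) := lift15_oriented a w in (X, (Y, Z)).

Lemma rep_3_4_45_parity m u v w : m mod 8 = 1 -> represents 3 4 45 m (u, (v, w)) ->
  u = 2 * (u / 2) /\ w mod 2 = 1 /\ (v - u / 2) mod 2 = 1.
Proof.
  intros Hm E. hnf in E.
  assert (Hi : exists i, m = 8 * i + 1) by (exists (m / 8); Z.div_mod_to_equations; lia).
  destruct Hi as [i ->]. clear Hm.
  square_cases_on u; square_cases_on v; square_cases_on w; try lia;
    repeat split; Z.div_mod_to_equations; lia.
Qed.

Lemma oddrep_3_4_45 m : m mod 8 = 1 -> oddrep 3 4 45 (4 * m) = (2 * Nrep 3 4 45 m)%nat.
Proof.
  intros Hm. apply oddrep_twice_Nrep with (g := lift_3_4_45); [lia | lia | lia | | |].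
  - intros [u [v w]] e Ht.
    destruct (rep_3_4_45_parity m u v w Hm Ht) as (Hu & Hw & Hvu).
    unfold lift_3_4_45.
    destruct (lift3 v (u / 2) e) as [Y a] eqn:E3.
    destruct (lift3_spec _ _ _ _ _ Hvu E3) as (HY & Ha & Hnorm3).
    destruct (lift15_oriented a w) as [X Z] eqn:E15.
    destruct (lift15_oriented_spec _ _ _ _ Ha Hw E15) as (HX & HZ & Hnorm15).
    split; [repeat split; assumption|]. hnf in Ht |- *. rewrite Hu in Ht. lia.
  - intros [u [v w]] e [u' [v' w']] e' Ht Ht' E.
    destruct (rep_3_4_45_parity m u v w Hm Ht) as (Hu & Hw & Hvu).
    destruct (rep_3_4_45_parity m u' v' w' Hm Ht') as (Hu' & Hw' & Hvu').
    unfold lift_3_4_45 in E.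
    destruct (lift3 v (u / 2) e) as [Y a] eqn:E3, (lift3 v' (u' / 2) e') as [Y' a'] eqn:E3'.
    destruct (lift3_spec _ _ _ _ _ Hvu E3) as (_ & Ha & _),
      (lift3_spec _ _ _ _ _ Hvu' E3') as (_ & Ha' & _).
    destruct (lift15_oriented a w) as [X Z] eqn:E15, (lift15_oriented a' w') as [X' Z'] eqn:E15'.
    apply Z3_eq in E as (-> & -> & ->). rewrite <- E15' in E15.
    destruct (lift15_oriented_inj _ _ _ _ Ha Hw Ha' Hw' E15) as (-> & ->).
    rewrite <- E3' in E3. destruct (lift3_inj _ _ _ _ _ _ Hvu E3) as (-> & Hu2 & ->).
    split; [apply Z3_eq; lia | reflexivity].
  - intros [X [Y Z]] (HX & HY & HZ) E. hnf in E.
    destruct (odd_square_mod8 Y HY) as [j HYj].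
    assert (H32 : (X * X + 15 * (Z * Z)) mod 32 = 0).
    { assert (H3 : 3 * (X * X + 15 * (Z * Z)) = 32 * (m / 8 - j))
        by (clear - Hm E HYj; Z.div_mod_to_equations; lia).
      revert H3. generalize (X * X + 15 * (Z * Z)). intros N HN. Z.div_mod_to_equations; lia. }
    destruct (lift15_oriented_surj X Z HX HZ H32) as (a & w & Ha & Hw & E15).
    destruct (lift15_oriented_spec _ _ _ _ Ha Hw E15) as (_ & _ & Hnorm15).
    destruct (lift3_surj Y a HY Ha) as (i & k & e & Hik & E3).
    destruct (lift3_spec _ _ _ _ _ Hik E3) as (_ & _ & Hnorm3).
    exists (2 * k, (i, w)), e. split.
    + hnf. lia.
    + unfold lift_3_4_45. now rewrite half_double, E3, E15.
Qed.

Theorem theorem6p2 (n : Z) (hn : 0 < n) :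
  (n mod 4 = 0 -> trep 1 4 15 n = (2 * Nrep 1 4 15 (2 * n + 5))%nat) /\
  (n mod 4 = 2 -> trep 1 12 15 n = (2 * Nrep 1 12 15 (2 * n + 7))%nat) /\
  (n mod 4 = 2 -> trep 1 15 20 n = (2 * Nrep 1 15 20 (2 * n + 9))%nat) /\
  (n mod 4 = 2 -> trep 3 4 45 n = (2 * Nrep 3 4 45 (2 * n + 13))%nat).
Proof.
  repeat split; intro Hn; rewrite trep_oddrep by lia.
  - replace (8 * n + 1 + 4 + 15) with (4 * (2 * n + 5)) by ring.
    apply oddrep_1_4_15. Z.div_mod_to_equations; lia.
  - replace (8 * n + 1 + 12 + 15) with (4 * (2 * n + 7)) by ring.
    apply oddrep_1_12_15. Z.div_mod_to_equations; lia.
  - replace (8 * n + 1 + 15 + 20) with (4 * (2 * n + 9)) by ring.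
    apply oddrep_1_15_20. Z.div_mod_to_equations; lia.
  - replace (8 * n + 3 + 4 + 45) with (4 * (2 * n + 13)) by ring.
    apply oddrep_3_4_45. Z.div_mod_to_equations; lia.
Qed.
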